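(* Let $(b_n)_{n\ge0}$ be defined by $b_0=b_1=0$, $b_2=1$ and, for $n\ge3$, \[ b_n \;=\; \tfrac{19}{12}(n+1)-3 \;+\; \binom n2^{-1}\sum_{p=1}^{n}(n-p)\,b_{p-1}. \] Then for all $n\ge4$, \[ b_n=\frac{1}{24n(n-1)(n-2)}\Bigl(57n^4-48n^3H_n-178n^3+144n^2H_n+135n^2-96nH_n-14n+24\Bigr), \] and in particular $b_n\sim\tfrac{19}{8}n$ as $n\to\infty$.
   Context: $H_n=\sum_{k=1}^n1/k$ is the $n$-th harmonic number. (In the paper, $b_n=\mathbb E[\hat C_n]$ is the expected number of key comparisons made by Quickselect with Yaroslavskiy's dual-pivot partitioning to find the minimum of a uniformly random permutation of $n$ distinct keys.) *)

From HB Require Import structures.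
From mathcomp Require Import all_boot all_order all_algebra.
Set Implicit Arguments. Unset Strict Implicit. Unset Printing Implicit Defensive.
Import Order.TTheory GRing.Theory Num.Theory.
Local Open Scope ring_scope.

Definition harmonic (n : nat) : rat := \sum_(1 <= k < n.+1) (k%:R)^-1.

(** Given s = [:: b_0; ...; b_(n-1)], compute b_n by the recurrence. *)
Definition b_next (n : nat) (s : seq rat) : rat :=
  if (n <= 1)%N then 0
  else if n == 2%N then 1
  else (19%:R / 12%:R) * (n.+1)%:R - 3%:R
       + ('C(n, 2))%:R^-1 * \sum_(1 <= p < n.+1) ((n - p)%N)%:R * nth 0 s p.-1.

Fixpoint b_list (n : nat) : seq rat :=
  match n with
  | 0 => [::]
  | k.+1 => rcons (b_list k) (b_next k (b_list k))
  end.

(** b_n : expected number of comparisons. *)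
Definition b (n : nat) : rat := nth 0 (b_list n.+1) n.

Lemma b_small : [:: b 0; b 1; b 2; b 3] = [:: 0; 0; 1; b 3]. Proof. by []. Qed.

From HB Require Import structures.
From mathcomp Require Import all_boot all_order all_algebra.
From mathcomp Require Import ring lra zify.
Import Order.TTheory GRing.Theory Num.Theory.
Local Open Scope ring_scope.

(* Write t(x) = 19/12 (x + 1) - 3 for the toll of one partitioning stage and
   S_n = sum_(j < n) (n - 1 - j) b_j for the weighted sum occurring in the
   recurrence, so that C(n,2) (b_n - t(n)) = S_n for n >= 3.  Since the second
   difference of S is S_(n+2) - 2 S_(n+1) + S_n = b_n, the full-history
   recurrence collapses to the three-term recurrence
     C(n+2,2)(b_(n+2) - t(n+2)) = 2 C(n+1,2)(b_(n+1) - t(n+1))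
                                   - C(n,2)(b_n - t(n)) + b_n      (n >= 3).
   The claimed closed form F(n, H_n) satisfies the same recurrence (a rational
   function identity, [closed_form_rec]), and agrees with b at n = 3, 4, so
   b_n = F(n, H_n) for all n >= 3 by two-step induction.
   For the asymptotics, |F(x, h)/x - 19/8| <= (2h + 1)/x for x >= 4, and
   H_n^2 <= 4n makes the right-hand side smaller than any eps > 0 for large n. *)

Definition half2 {R : numFieldType} (x : R) : R := x * (x - 1) / 2.
Definition toll {R : numFieldType} (x : R) : R := 19 / 12 * (x + 1) - 3.

Definition closed_form {R : numFieldType} (x h : R) : R :=
  (24 * x * (x - 1) * (x - 2))^-1 *
  (57 * x ^+ 4 - 48 * x ^+ 3 * h - 178 * x ^+ 3 + 144 * x ^+ 2 * h
   + 135 * x ^+ 2 - 96 * x * h - 14 * x + 24).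

Lemma natr_bin2 (R : numFieldType) (n : nat) : ('C(n, 2))%:R = half2 (n%:R : R).
Proof.
rewrite /half2; elim: n => [|n IH]; first by rewrite bin0n mul0r mul0r.
have two_neq0 : (2 : R) != 0 by rewrite pnatr_eq0.
rewrite binS bin1 natrD IH -natr1.
by apply: (mulIf two_neq0); rewrite mulrDl !mulfVK //; ring.
Qed.

Lemma half2_gt0 (R : realFieldType) (x : R) : 1 < x -> 0 < half2 x.
Proof. by move=> x_gt1; rewrite /half2 !mulr_gt0 ?invr_gt0 //; lra. Qed.

(* The closed form satisfies the three-term recurrence obeyed by b, with
   H_(n+1) = H_n + 1/(n+1) and H_(n+2) = H_(n+1) + 1/(n+2). *)
Lemma closed_form_rec (R : realFieldType) (x h : R) : 3 <= x ->
  half2 (x + 2) * (closed_form (x + 2) (h + (x + 1)^-1 + (x + 2)^-1) - toll (x + 2))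
  = 2 * (half2 (x + 1) * (closed_form (x + 1) (h + (x + 1)^-1) - toll (x + 1)))
    - half2 x * (closed_form x h - toll x) + closed_form x h.
Proof.
move=> x_ge3.
have x0 : x != 0 by apply/eqP; lra.
have x1 : x - 1 != 0 by apply/eqP; lra.
have x2 : x - 2 != 0 by apply/eqP; lra.
have x1' : x + 1 != 0 by apply/eqP; lra.
have x2' : x + 2 != 0 by apply/eqP; lra.
by rewrite /half2 /closed_form /toll; field; rewrite x0 x1 x2 x1' x2'.
Qed.

Lemma closed_form_propagates (R : realFieldType) (x h b0 b1 b2 s0 s1 s2 : R) :
  3 <= x ->
  half2 x * (b0 - toll x) = s0 ->
  half2 (x + 1) * (b1 - toll (x + 1)) = s1 ->
  half2 (x + 2) * (b2 - toll (x + 2)) = s2 ->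
  s2 - 2 * s1 + s0 = b0 ->
  b0 = closed_form x h -> b1 = closed_form (x + 1) (h + (x + 1)^-1) ->
  b2 = closed_form (x + 2) (h + (x + 1)^-1 + (x + 2)^-1).
Proof.
move=> x_ge3 rec0 rec1 rec2 diff2 b0E b1E.
have half2_neq0 : half2 (x + 2) != 0 by apply/lt0r_neq0/half2_gt0; lra.
apply: (addIr (- toll (x + 2))); apply: (mulfI half2_neq0).
rewrite rec2 closed_form_rec // -b0E -b1E rec1 rec0 -diff2; ring.
Qed.

Lemma closed_form_deviation (R : realFieldType) (x h : R) : 4 <= x -> 0 <= h ->
  `|closed_form x h / x - 19 / 8| <= (2 * h + 1) / x.
Proof.
move=> x_ge4 h_ge0.
have x0 : x != 0 by apply/eqP; lra.
have x1 : x - 1 != 0 by apply/eqP; lra.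
have x2 : x - 2 != 0 by apply/eqP; lra.
have x_gt0 : 0 < x by lra.
have cubic_ge24 : 24 <= x * (x - 1) * (x - 2).
  have : 12 <= x * (x - 1) by nra.
  have : 2 <= x - 2 by lra.
  nra.
set u := x^-1; set c := (x * (x - 1) * (x - 2))^-1.
have u_gt0 : 0 < u by rewrite invr_gt0.
have c_ge0 : 0 <= c by rewrite invr_ge0; lra.
have c_le : c <= 24^-1 by rewrite lef_pV2 // ?posrE //; lra.
have -> : closed_form x h / x - 19 / 8 = - ((48 * h + 7) / 24 * u) + u * c.
  by rewrite /closed_form /u /c; field; rewrite x0 x1 x2.
apply: le_trans (ler_normD _ _) _.
rewrite normrN !ger0_norm; last 2 first.
- by apply: mulr_ge0; lra.
- by apply: mulr_ge0; lra.
have : u * c <= u / 24 by rewrite ler_wpM2l //; lra.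
nra.
Qed.

Lemma sqrt_ratio_small (R : realFieldType) (eps x h : R) :
  0 < eps -> 0 <= h -> h ^+ 2 <= 4 * x ->
  64 / (eps * eps) + 2 / eps < x -> (2 * h + 1) / x < eps.
Proof.
move=> eps_gt0 h_ge0 h_sq x_large.
set w := eps^-1.
have eps_w : eps * w = 1 by exact: mulfV (lt0r_neq0 eps_gt0).
have w_gt0 : 0 < w by rewrite invr_gt0.
rewrite (_ : 64 / (eps * eps) + 2 / eps = 64 * w * w + 2 * w) in x_large;
  last by rewrite /w invfM mulrA.
have x_gt0 : 0 < x by nra.
have ex_large : 64 * w + 2 < eps * x.
  have : eps * (64 * w * w + 2 * w) < eps * x by rewrite ltr_pM2l.
  have -> : eps * (64 * w * w + 2 * w) = 64 * w * (eps * w) + 2 * (eps * w) by ring.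
  by rewrite eps_w !mulr1.
have ex_sq : 64 * x <= eps * x * (eps * x).
  have : 64 * w * (eps * x) <= eps * x * (eps * x) by rewrite ler_pM2r; nra.
  have -> : 64 * w * (eps * x) = 64 * x * (eps * w) by ring.
  by rewrite eps_w mulr1.
have : 4 * h < eps * x by nra.
rewrite ltr_pdivrMr //; lra.
Qed.

Lemma harmonicS (n : nat) : harmonic n.+1 = harmonic n + (n.+1)%:R^-1.
Proof. by rewrite /harmonic big_nat_recr. Qed.

Lemma harmonic0 : harmonic 0 = 0.
Proof. by rewrite /harmonic big_geq. Qed.

Lemma harmonic_ge0 (n : nat) : 0 <= harmonic n.
Proof. by apply: sumr_ge0 => i _; rewrite invr_ge0. Qed.

Lemma inv_succ_bounds (n : nat) :
  let u : rat := (n.+1)%:R^-1 in [/\ 0 <= u, u <= 1 & n%:R * u <= 1].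
Proof.
have n1_gt0 : 0 < (n.+1)%:R :> rat by rewrite ltr0n.
split; first by rewrite invr_ge0 ltW.
- by rewrite invf_le1 // ler1n.
- by rewrite ler_pdivrMr // mul1r ler_nat.
Qed.

Lemma harmonic_le (n : nat) : harmonic n <= n%:R.
Proof.
elim: n => [|n IH]; first by rewrite harmonic0.
have [_ u_le1 _] := inv_succ_bounds n.
rewrite harmonicS; move: (n.+1%:R^-1 : rat) u_le1 => u u_le1.
by rewrite -natr1; lra.
Qed.

Lemma harmonic_sq_le (n : nat) : harmonic n ^+ 2 <= 4 * n%:R.
Proof.
elim: n => [|n IH]; first by rewrite harmonic0 expr0n mulr0.
have h_ge0 := harmonic_ge0 n; have h_le := harmonic_le n.
have [u_ge0 u_le1 nu_le1] := inv_succ_bounds n.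
rewrite harmonicS.
move: (harmonic n) (n.+1%:R^-1 : rat) h_ge0 h_le IH u_ge0 u_le1 nu_le1
  => h u h_ge0 h_le IH u_ge0 u_le1 nu_le1.
rewrite -natr1.
have hu_le : h * u <= n%:R * u by rewrite ler_wpM2r.
have uu_le : u * u <= u * 1 by rewrite ler_wpM2l.
have -> : (h + u) ^+ 2 = h ^+ 2 + 2 * (h * u) + u * u by ring.
lra.
Qed.

Lemma size_b_list (n : nat) : size (b_list n) = n.
Proof. by elim: n => //= n IH; rewrite size_rcons IH. Qed.

Lemma nth_b_list (n j : nat) : (j < n)%N -> nth 0 (b_list n) j = b j.
Proof.
elim: n => // n IH; rewrite ltnS leq_eqVlt => /orP [/eqP -> | j_lt]; first by [].
by rewrite /= nth_rcons size_b_list j_lt IH.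
Qed.

Lemma b_unfold (n : nat) : b n = b_next n (b_list n).
Proof. by rewrite /b /= nth_rcons size_b_list ltnn eqxx. Qed.

Definition prefix_sum (n : nat) : rat := \sum_(j < n) b j.
Definition weighted_sum (n : nat) : rat := \sum_(j < n) ((n.-1 - j)%N)%:R * b j.

Lemma prefix_sumS (n : nat) : prefix_sum n.+1 = prefix_sum n + b n.
Proof. by rewrite /prefix_sum big_ord_recr. Qed.

Lemma weighted_sumS (n : nat) : weighted_sum n.+1 = weighted_sum n + prefix_sum n.
Proof.
rewrite /weighted_sum /prefix_sum big_ord_recr /= subnn mul0r addr0 -big_split.
apply: eq_bigr => i _.
have -> : (n - i = (n.-1 - i).+1)%N by have := ltn_ord i; lia.
by rewrite -natr1 mulrDl mul1r.
Qed.

Lemma weighted_sum_diff2 (n : nat) :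
  weighted_sum n.+2 - 2 * weighted_sum n.+1 + weighted_sum n = b n.
Proof. rewrite !weighted_sumS prefix_sumS; ring. Qed.

Lemma b_weighted (n : nat) : (3 <= n)%N ->
  half2 (n%:R : rat) * (b n - toll n%:R) = weighted_sum n.
Proof.
move=> n_ge3; rewrite b_unfold /b_next.
have -> : (n <= 1)%N = false by lia.
have -> : (n == 2%N) = false by lia.
have -> : \sum_(1 <= p < n.+1) ((n - p)%N)%:R * nth 0 (b_list n) p.-1
          = weighted_sum n.
  rewrite /weighted_sum big_add1 /= big_mkord; apply: eq_bigr => i _.
  by rewrite nth_b_list // (_ : (n - i.+1 = n.-1 - i)%N) //; lia.
have bin_neq0 : ('C(n, 2))%:R != 0 :> rat.
  by rewrite pnatr_eq0 -lt0n bin_gt0; lia.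
by rewrite -natr_bin2 /toll -natr1; field.
Qed.

Lemma b_closed_step (n : nat) : (3 <= n)%N ->
  b n = closed_form n%:R (harmonic n) ->
  b n.+1 = closed_form n.+1%:R (harmonic n.+1) ->
  b n.+2 = closed_form n.+2%:R (harmonic n.+2).
Proof.
move=> n_ge3 b_n b_n1.
have n_ge3' : 3 <= n%:R :> rat by rewrite (ler_nat rat 3 n).
have nat1 : n.+1%:R = n%:R + 1 :> rat by rewrite -natr1.
have nat2 : n.+2%:R = n%:R + 2 :> rat by rewrite -natr1 nat1 -addrA.
have rec_n1 := b_weighted n.+1 ltac:(lia).
have rec_n2 := b_weighted n.+2 ltac:(lia).
rewrite harmonicS nat1 in b_n1; rewrite nat1 in rec_n1; rewrite nat2 in rec_n2.
rewrite !harmonicS nat1 nat2.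
exact: (@closed_form_propagates rat _ _ _ _ _ _ _ _ n_ge3' (b_weighted n n_ge3)
          rec_n1 rec_n2 (weighted_sum_diff2 n) b_n b_n1).
Qed.

Lemma b_initial : [/\ b 0 = 0, b 1 = 0 & b 2 = 1].
Proof. by []. Qed.

Lemma b3 : b 3 = closed_form 3%:R (harmonic 3).
Proof.
have [b0 b1 b2] := b_initial.
have := b_weighted 3 isT.
rewrite /weighted_sum !big_ord_recr big_ord0 /= b0 b1 b2 subnn !mulr0 mulr1 !add0r.
move: (b 3) => c; rewrite !harmonicS harmonic0 /half2 /toll /closed_form => rec3.
have -> : c = 19 / 12 * (3 + 1) - 3 by lra.
by field.
Qed.

Lemma b4 : b 4 = closed_form 4%:R (harmonic 4).
Proof.
have [b0 b1 b2] := b_initial.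
have := b_weighted 4 isT.
rewrite /weighted_sum !big_ord_recr big_ord0 /= b0 b1 b2 subnn mul0r !mulr0 mulr1.
rewrite !add0r addr0 -[(3 - 2)%N]/1%N.
move: (b 4) => c; rewrite !harmonicS harmonic0 /half2 /toll /closed_form => rec4.
have -> : c = 19 / 12 * (4 + 1) - 3 + 1 / 6 by lra.
by field.
Qed.

Lemma b_closed (n : nat) : (3 <= n)%N -> b n = closed_form n%:R (harmonic n).
Proof.
suff pair_ok m : b m.+3 = closed_form m.+3%:R (harmonic m.+3) /\
                 b m.+4 = closed_form m.+4%:R (harmonic m.+4).
  by case: n => [|[|[|m]]] // _; case: (pair_ok m).
elim: m => [|m [IH3 IH4]]; first by split; [exact: b3 | exact: b4].
by split => //; apply: b_closed_step.
Qed.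

Theorem proposition5p3 :
  (forall n : nat, (4 <= n)%N ->
     b n = (24 * n%:R * (n%:R - 1) * (n%:R - 2))^-1 *
           (57 * n%:R ^+ 4 - 48 * n%:R ^+ 3 * harmonic n - 178 * n%:R ^+ 3
            + 144 * n%:R ^+ 2 * harmonic n + 135 * n%:R ^+ 2
            - 96 * n%:R * harmonic n - 14 * n%:R + 24))
  /\
  (forall eps : rat, 0 < eps ->
     exists N : nat, forall n : nat, (N <= n)%N ->
       `| b n / n%:R - 19 / 8 | < eps).
Proof.
split=> [n n_ge4 | eps eps_gt0]; first by apply: b_closed; lia.
set K := 64 / (eps * eps) + 2 / eps.
have K_ge0 : 0 <= K.
  have eps_ge0 : 0 <= eps := ltW eps_gt0.
  by apply: addr_ge0; apply: divr_ge0 => //; apply: mulr_ge0.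
exists (Num.Def.archi_bound K).+4 => n n_large.
have n_ge4 : 4 <= n%:R :> rat by rewrite (ler_nat rat 4 n); lia.
rewrite b_closed; last by lia.
apply: le_lt_trans (@closed_form_deviation rat _ _ n_ge4 (harmonic_ge0 n)) _.
apply: (@sqrt_ratio_small rat _ _ _ eps_gt0 (harmonic_ge0 n) (harmonic_sq_le n)).
apply: lt_le_trans (archi_boundP K_ge0) _.
by rewrite ler_nat; lia.
Qed.
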